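(* Let $1\le a\le b\le n$, $h\in H_{n,\varpi_a}$ and $E\in B(\varpi_a)$. Write $$t^{\ell(u_E)}(T_{u_E^{-1}})^{-1}h=\sum_{F\in B(\varpi_b)}T_{u_F}h_F\qquad\text{with } h_F\in H_{n,\varpi_b}.$$ If $F\otimes E$ is not semistandard, then $h_F=0$.
   Context: Fix $n\ge1$, $[n]=\{1,\dots,n\}$. $S_n$ with simple transpositions $s_i$ and length $\ell(\cdot)$ acts on $\mathbb Z^n$ by permuting coordinates; $\varpi_k=\varepsilon_1+\dots+\varepsilon_k$; $S_{n,\lambda}$ is the stabilizer of $\lambda$. $H_n$ is the Iwahori–Hecke algebra of $S_n$ over $\mathbb Z[t^{\pm1}]$: generators $T_1,\dots,T_{n-1}$ with $T_i^2=(t-1)T_i+t$, $T_iT_{i+1}T_i=T_{i+1}T_iT_{i+1}$, $T_iT_j=T_jT_i$ ($|i-j|>1$); $T_w=T_{i_1}\cdots T_{i_m}$ for a reduced word; $\{T_w\}$ is a basis; $H_{n,\lambda}=\mathrm{span}\{T_w:w\in S_{n,\lambda}\}$. Every element of $H_n$ has a unique expression $\sum_{F\in B(\varpi_b)}T_{u_F}h_F$ with $h_F\in H_{n,\varpi_b}$. Columns: $B(\varpi_\ell)$ is the set of $C=(c_1<\dots<c_\ell)\subseteq[n]$; $u_C\in S_n$ sends $k\mapsto c_k$ ($k\le\ell$) and $\ell+1,\dots,n$ increasingly onto $[n]\setminus C$. For $F\in B(\varpi_b)$, $E\in B(\varpi_a)$, $a\le b$, $F\otimes E$ is the two-column filling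 with left column $F$ and right column $E$; it is semistandard iff $f_i\le e_i$ for all $i\in[a]$. *)

From HB Require Import structures.
From mathcomp Require Import all_boot all_order fingroup perm all_algebra fraction.
Set Implicit Arguments. Unset Strict Implicit. Unset Printing Implicit Defensive.
Import Order.TTheory GRing.Theory Num.Theory.
Local Open Scope ring_scope.

(* ---------- Coefficients: Z[t^{+-1}] inside the field Q(t) = Frac(Z[t]) ---------- *)
Notation K := {fraction {poly int}}.
Notation "p %:F" := (@FracField.tofrac _ p) : ring_scope.
Definition tt : K := ('X : {poly int})%:F.
Definition laurent (x : K) : Prop :=
  exists (k : nat) (p : {poly int}), x * tt ^+ k = p%:F.

(* composition of permutations as functions: (comp u v) k = u (v k) *)
Definition comp n (u v : 'S_n) : 'S_n := (v * u)%g.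

(* simple transposition s_{i+1} (0-based: swaps i and i+1), for i.+1 < n *)
Definition sref n (i : nat) : 'S_n :=
  match @insub _ (fun k => k < n)%N _ i, @insub _ (fun k => k < n)%N _ i.+1 with
  | Some j, Some j' => tperm j j'
  | _, _ => 1%g
  end.

Definition len n (w : 'S_n) : nat :=
  #|[set p : 'I_n * 'I_n | (p.1 < p.2)%N && (w p.2 < w p.1)%N]|.

(* a reduced word for w, obtained by repeatedly stripping right descents:
   w = (w s_i) s_i with len (w s_i) = len w - 1 *)
Fixpoint redword_fuel n (fuel : nat) (w : 'S_n) : seq nat :=
  match fuel with
  | 0 => [::]
  | f.+1 =>
    match [pick p : 'I_n * 'I_n | (p.2 == p.1.+1 :> nat) && (w p.2 < w p.1)%N] with
    | Some p => rcons (redword_fuel f (comp w (sref n p.1))) (nat_of_ord p.1)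
    | None => [::]
    end
  end.
Definition redword n (w : 'S_n) : seq nat := redword_fuel (n * n) w.

(* ---------- The Iwahori-Hecke algebra H_n, free on {T_w : w in S_n} ---------- *)
Notation H n := {ffun 'S_n -> K}.

Definition hsc n (c : K) (f : H n) : H n := [ffun v => c * f v].

Definition T n (w : 'S_n) : H n := [ffun v => (v == w)%:R].

Definition Ti_act n (i : nat) (h : H n) : H n :=
  \sum_(w : 'S_n) hsc (h w)
    (if (len w < len (comp (sref n i) w))%N then T (comp (sref n i) w)
     else hsc (tt - 1) (T w) + hsc tt (T (comp (sref n i) w))).

Definition Tw_act n (w : 'S_n) (h : H n) : H n := foldr (@Ti_act n) h (redword w).

Definition hmul n (f g : H n) : H n := \sum_(w : 'S_n) hsc (f w) (Tw_act w g).
Definition hone n : H n := T 1%g.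

Definition laurentH n (h : H n) : Prop := forall w, laurent (h w).

(* the stabilizer of varpi_k = e_1 + ... + e_k: permutations preserving {1..k} *)
Definition stab_varpi n (k : nat) (w : 'S_n) : bool :=
  [forall j : 'I_n, (j < k)%N == (w j < k)%N].
Definition Hpar n (k : nat) (h : H n) : Prop :=
  forall w, ~~ stab_varpi k w -> h w = 0.

Definition col_seq n (C : {set 'I_n}) : seq 'I_n :=
  [seq x <- enum 'I_n | x \in C] ++ [seq x <- enum 'I_n | x \notin C].

Lemma col_seq_size n (C : {set 'I_n}) : size (col_seq C) = n.
Proof.
rewrite /col_seq size_cat !size_filter count_predC size_enum_ord //.
Qed.

Lemma col_seq_uniq n (C : {set 'I_n}) : uniq (col_seq C).
Proof.
rewrite /col_seq cat_uniq; apply/and3P; split; try exact/filter_uniq/enum_uniq.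
apply/hasPn => x; rewrite !mem_filter => /andP[xC _].
by rewrite (negbTE xC).
Qed.

Definition uC_fun n (C : {set 'I_n}) (k : 'I_n) : 'I_n := nth k (col_seq C) k.

Lemma uC_fun_inj n (C : {set 'I_n}) : injective (uC_fun C).
Proof.
move=> i j; rewrite /uC_fun => e.
have ej : nth j (col_seq C) j = nth i (col_seq C) j.
  by apply: set_nth_default; rewrite col_seq_size.
apply/val_inj/eqP; rewrite -(nth_uniq i _ _ (col_seq_uniq C)) ?col_seq_size //.
  by rewrite e ej.
all: by rewrite ?col_seq_size ltn_ord.
Qed.

(* u_C : k |-> c_k (k <= |C|), and the remaining indices increasingly onto [n] \ C *)
Definition uC n (C : {set 'I_n}) : 'S_n := perm (@uC_fun_inj n C).

Definition centry n (C : {set 'I_n}) (i : nat) (d : 'I_n) : 'I_n :=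
  nth d [seq x <- enum 'I_n | x \in C] i.

(* F (x) E (F left column, E right column, |E| <= |F|) is semistandard iff f_i <= e_i, i in [|E|] *)
Definition semistandard n (F E : {set 'I_n}) : Prop :=
  forall (i : nat) (d : 'I_n), (i < #|E|)%N -> (centry F i d <= centry E i d)%N.

From Pilot Require Import Defs.
From mathcomp Require Import all_boot all_order fingroup perm all_algebra fraction.
From mathcomp Require Import zify ring.
Set Implicit Arguments. Unset Strict Implicit. Unset Printing Implicit Defensive.
Import GRing.Theory.

(* Since [T_i] only moves the support of an element from [z] to [z] or [s_i z], the
   coefficients of [x = (T_{u_E^{-1}})^{-1}] are triangular for the order comparing the
   sorted columns [z(1..a)] entrywise: every [z] in the support of [x] has column at most
   [E].  Multiplying on the left by [T_w] a parabolic element of [H_{n,varpi_a}] only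
   reaches permutations whose column is below that of [w], hence [x h] is supported on
   permutations with column at most [E].  On the other side [T_{u_F} h_F] is supported
   on the coset [u_F S_{n,varpi_b}], and these cosets are disjoint, so [h_F y] is the
   coefficient of [x h] at [u_F y]; when it is nonzero, the first [a] entries of [F] are
   entrywise at most those of [E], i.e. [F (x) E] is semistandard.  Neither the power of
   [t] nor the integrality of the coefficients plays a role. *)

Local Notation pcomp := Defs.comp.

Section Length.
Variable n : nat.
Implicit Types (u v w y z : 'S_n).

Lemma pcompE w v k : pcomp w v k = w (v k).
Proof. by rewrite /Defs.comp permM. Qed.

Lemma pcompA u v w : pcomp u (pcomp v w) = pcomp (pcomp u v) w.
Proof. by rewrite /Defs.comp mulgA. Qed.

Lemma pcompw1 w : pcomp w 1 = w. Proof. by rewrite /Defs.comp mul1g. Qed.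
Lemma pcomp1w w : pcomp 1 w = w. Proof. by rewrite /Defs.comp mulg1. Qed.
Lemma pcompKV u w : pcomp u (pcomp (u^-1)%g w) = w.
Proof. by rewrite pcompA /Defs.comp mulVg mulg1. Qed.
Lemma pcompVK u w : pcomp (u^-1)%g (pcomp u w) = w.
Proof. by rewrite pcompA /Defs.comp mulgV mulg1. Qed.

Lemma invg_pcomp u v : ((pcomp u v)^-1)%g = pcomp (v^-1)%g (u^-1)%g.
Proof. by rewrite /Defs.comp invMg. Qed.

Definition swapS (i k : nat) : nat :=
  if k == i then i.+1 else if k == i.+1 then i else k.

Lemma srefE i (k : 'I_n) : i.+1 < n -> val (sref n i k) = swapS i k.
Proof.
move=> hi; rewrite /sref.
case: insubP => [j _ ej|]; last by rewrite /=; lia.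
case: insubP => [j' _ ej'|]; last by rewrite /=; lia.
rewrite /swapS; case: tpermP => [->|->|nj nj'].
- by rewrite ej ej' eqxx.
- by rewrite ej ej' eqxx ifN //; lia.
- have /negbTE -> : val k != i by apply/eqP => ki; apply: nj; apply: val_inj; rewrite ki ej.
  have /negbTE -> : val k != i.+1.
    by apply/eqP => ki; apply: nj'; apply: val_inj; rewrite ki ej'.
  by [].
Qed.

Lemma swapS_ltn i p q : ~~ ((p == i) && (q == i.+1)) -> ~~ ((p == i.+1) && (q == i)) ->
  (swapS i p < swapS i q) = (p < q).
Proof.
rewrite /swapS => h1 h2.
case: (p =P i) h1 h2 => e1; case: (q =P i) => e2; case: (p =P i.+1) => e3;
  case: (q =P i.+1) => e4 /= h1 h2; lia.
Qed.

Lemma lenE w : len w = \sum_(p : 'I_n * 'I_n) ((p.1 < p.2) && (w p.2 < w p.1)).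
Proof.
rewrite /len -sum1_card big_mkcond /=; apply: eq_bigr => p _.
by rewrite inE; case: ifP.
Qed.

Lemma len1 : len (1%g : 'S_n) = 0.
Proof. by rewrite lenE big1 // => p _; rewrite !perm1; case: ltngtP. Qed.

Lemma len_invg w : len (w^-1)%g = len w.
Proof.
rewrite !lenE.
have swap_inj : injective (fun p : 'I_n * 'I_n => (w p.2, w p.1)).
  by move=> [p1 p2] [q1 q2] /= [/perm_inj -> /perm_inj ->].
rewrite (reindex_inj swap_inj) /=; apply: eq_bigr => p _; rewrite !permK andbC //.
Qed.

Lemma len_max w : len w <= n * n.
Proof. by rewrite /len; apply: leq_trans (max_card _) _; rewrite card_prod card_ord. Qed.

Section SimpleReflection.
Variables (i : nat) (hi : i.+1 < n).
Local Notation s := (sref n i).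
Local Notation i0 := (Ordinal (ltnW hi)).
Local Notation i1 := (Ordinal hi).

Lemma sref_i0 : s i0 = i1.
Proof. by apply: val_inj; rewrite srefE //= /swapS eqxx. Qed.

Lemma sref_i1 : s i1 = i0.
Proof. by apply: val_inj; rewrite srefE //= /swapS eqxx ifN //; lia. Qed.

Lemma sref_invol : pcomp s s = 1%g.
Proof.
apply/permP => k; apply: val_inj; rewrite pcompE perm1 !srefE // /swapS.
case: (eqVneq (val k) i) => [->|ki] /=; first by rewrite eqxx ifN //; lia.
case: (eqVneq (val k) i.+1) => [->|ki1] /=; first by rewrite eqxx.
by rewrite (negbTE ki) (negbTE ki1).
Qed.

Lemma srefK k : s (s k) = k.
Proof. by rewrite -pcompE sref_invol perm1. Qed.

Lemma sref_invg : (s^-1)%g = s.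
Proof.
by apply/permP => k; apply: (@perm_inj _ s); rewrite permKV -pcompE sref_invol perm1.
Qed.

Lemma pcompSK w : pcomp s (pcomp s w) = w.
Proof. by rewrite pcompA sref_invol pcomp1w. Qed.

Lemma pcompKS w : pcomp (pcomp w s) s = w.
Proof. by rewrite -pcompA sref_invol pcompw1. Qed.

(* Right multiplication by [s] permutes the inversions of [w] except the pair {i, i+1}. *)
Lemma len_pcompS w : len (pcomp w s) + (w i1 < w i0) = len w + (w i0 < w i1).
Proof.
rewrite !lenE.
have s_inj : injective (fun p : 'I_n * 'I_n => (s p.1, s p.2)).
  move=> [p1 p2] [q1 q2] /= [/(congr1 s) e1 /(congr1 s) e2].
  by rewrite !srefK in e1 e2; rewrite e1 e2.
rewrite (reindex_inj s_inj) /=.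
have d01 : (i0, i1) != (i1, i0) by apply/negP => /eqP [] e _; lia.
rewrite (bigD1 (i0, i1)) //= (bigD1 (i1, i0)) 1?eq_sym //=.
rewrite [in RHS](bigD1 (i0, i1)) //= [in RHS](bigD1 (i1, i0)) 1?eq_sym //=.
rewrite !pcompE !srefK sref_i0 sref_i1 /=.
have -> : \sum_(p | (p != (i0, i1)) && (p != (i1, i0)))
           ((s p.1 < s p.2) && (pcomp w s (s p.2) < pcomp w s (s p.1))) =
         \sum_(p | (p != (i0, i1)) && (p != (i1, i0))) ((p.1 < p.2) && (w p.2 < w p.1)).
  apply: eq_bigr => [[p q]] /andP [h1 h2] /=.
  by rewrite !pcompE !srefK !srefE // swapS_ltn.
have : w i0 != w i1 by rewrite (inj_eq perm_inj); apply/eqP => /(congr1 val) /=; lia.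
rewrite -!val_eqE /=; set S := \sum_(_ | _) _; move: (w i0) (w i1) => a0 a1.
rewrite ltnSn ltnNge leqnSn /=; lia.
Qed.

Lemma len_Spcomp y :
  len (pcomp s y) + ((y^-1)%g i1 < (y^-1)%g i0) = len y + ((y^-1)%g i0 < (y^-1)%g i1).
Proof. by rewrite -len_invg invg_pcomp sref_invg len_pcompS len_invg. Qed.

Lemma len_Spcomp_neq y : len (pcomp s y) != len y.
Proof.
have := len_Spcomp y.
case: (ltngtP ((y^-1)%g i1) ((y^-1)%g i0)) => [|| /val_inj/perm_inj/(congr1 val)] /=; lia.
Qed.

Lemma len_pcompS_desc w : w i1 < w i0 -> len (pcomp w s) + 1 = len w.
Proof.
move=> d; have := len_pcompS w; rewrite d ltnNge (ltnW d) /=; lia.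
Qed.

End SimpleReflection.

Lemma no_descent_id w :
  (forall i (hi : i.+1 < n), w (Ordinal (ltnW hi)) < w (Ordinal hi)) -> w = 1%g.
Proof.
move=> asc.
have le_w_nat : forall k (hk : k < n), k <= w (Ordinal hk).
  elim=> [//|k IH] hk; have := asc k hk; have := IH (ltnW hk); lia.
have le_w k : val k <= w k by rewrite (_ : k = Ordinal (ltn_ord k)) //; exact: val_inj.
have sum_eq : \sum_(k : 'I_n) val (w k) = \sum_(k : 'I_n) val k.
  by rewrite [RHS](reindex_inj (@perm_inj _ w)).
apply/permP => k; apply: val_inj; rewrite perm1 /=; apply/eqP; rewrite eqn_leq le_w andbT.
rewrite leqNgt; apply/negP => lt.
move: sum_eq; rewrite (bigD1 k) //= [in RHS](bigD1 k) //=.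
have : \sum_(j | j != k) val j <= \sum_(j | j != k) val (w j) by apply: leq_sum => j _.
move=> /= le_sum sum_eq; lia.
Qed.

Lemma descent_or_id w :
  (exists i (hi : i.+1 < n), w (Ordinal hi) < w (Ordinal (ltnW hi))) \/ w = 1%g.
Proof.
case: (pickP (fun p : 'I_n * 'I_n => (p.2 == p.1.+1 :> nat) && (w p.2 < w p.1)))
  => [[p q] /andP [/eqP /= e d]|none]; [left | right].
  have hi : p.+1 < n by rewrite -e.
  exists p, hi; suff [<- <-] : q = Ordinal hi /\ p = Ordinal (ltnW hi) by [].
  by split; apply: val_inj.
apply: no_descent_id => i hi; have := none (Ordinal (ltnW hi), Ordinal hi).
rewrite /= eqxx /= => /negbT; rewrite -leqNgt leq_eqVlt => /orP [|//].
by move=> /eqP/val_inj/perm_inj/(congr1 val) /=; lia.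
Qed.

Lemma redword_ind (P : 'S_n -> seq nat -> Prop) :
  P 1%g [::] ->
  (forall w i l (hi : i.+1 < n), w (Ordinal hi) < w (Ordinal (ltnW hi)) ->
     P (pcomp w (sref n i)) l -> P w (rcons l i)) ->
  forall w, P w (redword w).
Proof.
move=> P1 PS w; rewrite /redword.
suff : forall f w, len w <= f -> P w (redword_fuel f w) by apply; apply: len_max.
elim=> [|f IH] {}w hf /=.
  case: (descent_or_id w) => [[i [hi d]]|-> //].
  by have := len_pcompS_desc d; lia.
case: pickP => [p /andP [/eqP e d]|none]; last first.
  case: (descent_or_id w) => [[i [hi d]]|-> //].
  by have := none (Ordinal (ltnW hi), Ordinal hi); rewrite /= eqxx d.
have hi : p.1.+1 < n by rewrite -e.
have d' : w (Ordinal hi) < w (Ordinal (ltnW hi)).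
  have [-> ->] : Ordinal hi = p.2 /\ Ordinal (ltnW hi) = p.1 by split; apply: val_inj.
  exact: d.
apply: (PS _ _ _ hi d'); apply: IH; have := len_pcompS_desc d'; lia.
Qed.

Lemma len_pcomp_le u v : len (pcomp u v) <= len u + len v.
Proof.
move: u v; apply: (@redword_ind (fun u _ => forall v, len (pcomp u v) <= len u + len v))
  => [|u i l hi d IH] v; first by rewrite pcomp1w len1.
rewrite -{1}(pcompKS hi u) -pcompA.
apply: leq_trans (IH _) _.
have := len_Spcomp hi v; have := len_pcompS_desc d; lia.
Qed.

Lemma len_add_desc w i (hi : i.+1 < n) y :
  len (pcomp w (sref n i)) + 1 = len w -> len (pcomp w y) = len w + len y ->
  [/\ len (pcomp (sref n i) y) = len y + 1,
      (y^-1)%g (Ordinal (ltnW hi)) < (y^-1)%g (Ordinal hi) &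
      len (pcomp (pcomp w (sref n i)) (pcomp (sref n i) y)) =
        len (pcomp w (sref n i)) + len (pcomp (sref n i) y)].
Proof.
move=> desc add.
have e : pcomp (pcomp w (sref n i)) (pcomp (sref n i) y) = pcomp w y.
  by rewrite -pcompA pcompSK.
have := len_pcomp_le (pcomp w (sref n i)) (pcomp (sref n i) y); rewrite e => le.
have := len_Spcomp hi y.
case: (ltngtP ((y^-1)%g (Ordinal hi)) ((y^-1)%g (Ordinal (ltnW hi))))
  => [||/val_inj/perm_inj/(congr1 val)] /= lt_y; try lia.
by move=> ly; split; rewrite ?e; lia.
Qed.

End Length.

Section HeckeAction.
Variable n : nat.
Local Open Scope ring_scope.
Implicit Types (u v w y z : 'S_n) (g : H n).

Lemma tt_neq0 : tt != 0.
Proof. by rewrite /tt tofrac_eq0 polyX_eq0. Qed.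

Lemma Spcomp_neq i (hi : (i.+1 < n)%N) v : pcomp (sref n i) v != v.
Proof.
apply/eqP => /permP /(_ ((v^-1)%g (Ordinal (ltnW hi)))).
by rewrite pcompE permKV => /(congr1 val); rewrite srefE //= /swapS eqxx; lia.
Qed.

Lemma Ti_actE i (hi : (i.+1 < n)%N) g v :
  Ti_act i g v = if (len (pcomp (sref n i) v) < len v)%N
                 then g (pcomp (sref n i) v) + (tt - 1) * g v
                 else tt * g (pcomp (sref n i) v).
Proof.
have sv_neq := Spcomp_neq hi v.
rewrite /Ti_act sum_ffunE (bigD1 v) //= (bigD1 (pcomp (sref n i) v)) //= pcompSK //.
rewrite big1 => [|w /andP [w_neq sw_neq]]; last first.
  have /negbTE v_neq : v != w by rewrite eq_sym.
  have /negbTE v_neq' : v != pcomp (sref n i) w.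
    by apply: contra sw_neq => /eqP ->; rewrite pcompSK.
  rewrite ffunE; case: ifP => _;
    by rewrite !ffunE ?v_neq ?v_neq' /= ?mulr0n ?mulr0 ?addr0 ?mulr0.
rewrite addr0 !ffunE.
case: ltngtP (len_Spcomp_neq hi v) => //= _ _;
  rewrite !ffunE eqxx eq_sym (negbTE sv_neq) /=; ring.
Qed.

Lemma Ti_act_quadratic i (hi : (i.+1 < n)%N) g v :
  tt * g v = Ti_act i (Ti_act i g) v - (tt - 1) * Ti_act i g v.
Proof.
rewrite !Ti_actE // pcompSK //.
case: ltngtP (len_Spcomp_neq hi v) => //= hl _;
  by rewrite ?(ltnNge (len v)) ?(ltnW hl) //=; ring.
Qed.

Lemma Ti_act_supp i (hi : (i.+1 < n)%N) g v :
  Ti_act i g v != 0 -> g v != 0 \/ g (pcomp (sref n i) v) != 0.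
Proof.
rewrite Ti_actE //; case: (eqVneq (g v) 0) => [->|]; last by left.
case: (eqVneq (g (pcomp (sref n i) v)) 0) => [->|]; last by right.
by rewrite !mulr0 addr0; case: ifP; rewrite ?eqxx.
Qed.

(* [T_i] is invertible, by the quadratic relation. *)
Lemma Ti_act_supp_inv i (hi : (i.+1 < n)%N) g v :
  g v != 0 -> Ti_act i g v != 0 \/ Ti_act i g (pcomp (sref n i) v) != 0.
Proof.
move=> gv_neq0.
case: (eqVneq (Ti_act i g v) 0) => [Tgv0|]; last by left.
case: (eqVneq (Ti_act i g (pcomp (sref n i) v)) 0) => [Tgsv0|]; last by right.
have TTgv0 : Ti_act i (Ti_act i g) v = 0.
  by apply/eqP/negPn/negP => /(Ti_act_supp hi) []; rewrite ?Tgv0 ?Tgsv0 eqxx.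
have := Ti_act_quadratic hi g v; rewrite TTgv0 Tgv0 mulr0 subr0 => /eqP.
by rewrite mulf_eq0 (negbTE tt_neq0) (negbTE gv_neq0).
Qed.

Lemma Ti_act_ascent i (hi : (i.+1 < n)%N) g :
  (forall y, g y != 0 -> len (pcomp (sref n i) y) = (len y + 1)%N) ->
  forall v, Ti_act i g v = g (pcomp (sref n i) v).
Proof.
move=> asc v; rewrite Ti_actE //; case: ifP => desc.
  case: (eqVneq (g v) 0) => [->|/asc]; first by rewrite mulr0 addr0.
  by move: desc => /[swap] ->; lia.
case: (eqVneq (g (pcomp (sref n i) v)) 0) => [->|/asc]; first by rewrite mulr0.
by move: desc; rewrite pcompSK // => /negbT /[swap] ->; lia.
Qed.

(* [T_u T_y = T_{u y}] when [len (u y) = len u + len y]. *)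
Lemma Tw_act_additive u g : (forall y, g y != 0 -> len (pcomp u y) = (len u + len y)%N) ->
  forall z, Tw_act u g z = g (pcomp (u^-1)%g z).
Proof.
rewrite /Tw_act; move: u g.
apply: (@redword_ind n (fun u l => forall g,
  (forall y, g y != 0 -> len (pcomp u y) = (len u + len y)%N) ->
  forall z, foldr (@Ti_act n) g l z = g (pcomp (u^-1)%g z))) => [|u i l hi d IH] g /=.
  by move=> _ z; rewrite invg1 pcomp1w.
move=> add z; have desc := len_pcompS_desc d.
have asc y : g y != 0 -> len (pcomp (sref n i) y) = (len y + 1)%N.
  by move=> /add /(len_add_desc hi desc) [].
have TiE := Ti_act_ascent hi asc.
rewrite foldr_rcons IH => [|y]; last first.
  by rewrite TiE => /add /(len_add_desc hi desc) [_ _]; rewrite pcompSK.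
by rewrite TiE invg_pcomp sref_invg // pcompA pcompSK.
Qed.

End HeckeAction.

Section Dominance.
Variables (n a : nat).
Implicit Types (y z : 'S_n).

Definition nbelow z c := \sum_(k : 'I_n) ((k < a) && (z k < c)).

(* The column [z({1..a})] is entrywise below the column [y({1..a})]
   (both sorted increasingly): a Bruhat-type order on [S_n / S_{n,varpi_a}]. *)
Definition col_le z y := forall c, nbelow y c <= nbelow z c.

Lemma col_le_trans x y z : col_le x y -> col_le y z -> col_le x z.
Proof. by move=> le_xy le_yz c; apply: leq_trans (le_yz c) (le_xy c). Qed.

Lemma nbelowS z c (hc : c < n) : nbelow z c.+1 = nbelow z c + ((z^-1)%g (Ordinal hc) < a).
Proof.
rewrite /nbelow.
rewrite (eq_bigr (fun k : 'I_n =>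
  ((k < a) && (z k < c)) + ((k < a) && (z k == Ordinal hc)))); last first.
  move=> k _; rewrite -val_eqE /= ltnS.
  by case: (k < a); case: ltngtP => //=; rewrite addn0.
rewrite big_split /=; congr addn.
rewrite (bigD1 ((z^-1)%g (Ordinal hc))) //= permKV eqxx andbT big1 ?addn0 // => k hk.
by case: (z k =P Ordinal hc) hk => [<-|]; rewrite ?andbF // permK eqxx.
Qed.

Lemma nbelow_Spcomp i (hi : i.+1 < n) z c :
  c != i.+1 -> nbelow (pcomp (sref n i) z) c = nbelow z c.
Proof.
move/eqP=> hc; rewrite /nbelow; apply: eq_bigr => k _; rewrite pcompE srefE //.
congr (_ && _); rewrite /swapS.
case: (nat_of_ord (z k) =P i) => [->|zki]; first by apply/idP/idP; lia.
by case: (nat_of_ord (z k) =P i.+1) => [->|//]; apply/idP/idP; lia.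
Qed.

Lemma invg_Spcomp i (hi : i.+1 < n) y :
  ((pcomp (sref n i) y)^-1)%g (Ordinal (ltnW hi)) = (y^-1)%g (Ordinal hi).
Proof. by rewrite invg_pcomp sref_invg // pcompE sref_i0. Qed.

(* Left multiplication by [s_i] only changes [nbelow _ c] at [c = i + 1], where the
   claim is a linear inequality between the counts at [i], [i + 1] and [i + 2]. *)
Lemma col_le_Spcomp i (hi : i.+1 < n) y z : col_le z y ->
  ((y^-1)%g (Ordinal hi) < a -> (y^-1)%g (Ordinal (ltnW hi)) < a) ->
  col_le z (pcomp (sref n i) y) /\ col_le (pcomp (sref n i) z) (pcomp (sref n i) y).
Proof.
move=> le_zy asc.
have ii1 : i != i.+1 by rewrite neq_ltn ltnSn.
have Ey0 := nbelowS y (ltnW hi); have Ey1 := nbelowS y hi.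
have Ez0 := nbelowS z (ltnW hi); have Ez1 := nbelowS z hi.
have Esy0 := nbelowS (pcomp (sref n i) y) (ltnW hi).
have Esz0 := nbelowS (pcomp (sref n i) z) (ltnW hi).
rewrite invg_Spcomp (nbelow_Spcomp hi _ ii1) in Esy0.
rewrite invg_Spcomp (nbelow_Spcomp hi _ ii1) in Esz0.
have D0 := le_zy i; have D1 := le_zy i.+1; have D2 := le_zy i.+2.
split=> c; (case: (eqVneq c i.+1) => [->|hc]; last by rewrite !(nbelow_Spcomp hi _ hc) ?le_zy);
move: asc Ey0 Ey1 Ez0 Ez1 Esy0 Esz0 D0 D1 D2;
case: ((y^-1)%g (Ordinal hi) < a); case: ((y^-1)%g (Ordinal (ltnW hi)) < a);
case: ((z^-1)%g (Ordinal hi) < a); case: ((z^-1)%g (Ordinal (ltnW hi)) < a) => //= asc; lia.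
Qed.

Lemma col_le_stab y : stab_varpi a y -> col_le y 1%g.
Proof.
move=> /forallP st c; apply: eq_leq; rewrite /nbelow.
rewrite [LHS](reindex_inj (@perm_inj _ y)) /=.
by apply: eq_bigr => k _; rewrite perm1 (eqP (st k)).
Qed.

End Dominance.

Section SupportBound.
Variables (n a : nat).
Local Open Scope ring_scope.
Implicit Types (v w y z : 'S_n) (g : H n).

Definition supp_col_le g y := forall z, g z != 0 -> col_le a z y.

Lemma supp_col_le_Ti_act i (hi : (i.+1 < n)%N) g g' y :
  supp_col_le g' y ->
  (((y^-1)%g (Ordinal hi) < a)%N -> ((y^-1)%g (Ordinal (ltnW hi)) < a)%N) ->
  (forall z, g z != 0 -> g' z != 0 \/ g' (pcomp (sref n i) z) != 0) ->
  supp_col_le g (pcomp (sref n i) y).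
Proof.
move=> supp_g' asc supp_g z /supp_g [/supp_g' le_zy | /supp_g' le_szy].
  by have [] := col_le_Spcomp le_zy asc.
by have [_] := col_le_Spcomp le_szy asc; rewrite pcompSK.
Qed.

Lemma supp_col_le_of_Tw_act v g : supp_col_le (Tw_act v g) 1%g -> supp_col_le g (v^-1)%g.
Proof.
rewrite /Tw_act; move: v g.
apply: (@redword_ind n (fun v l => forall g,
  supp_col_le (foldr (@Ti_act n) g l) 1%g -> supp_col_le g (v^-1)%g))
  => [|w i l hi d IH] g /=; first by rewrite invg1.
rewrite foldr_rcons => /IH supp_Tig.
have -> : (w^-1)%g = pcomp (sref n i) ((pcomp w (sref n i))^-1)%g.
  by rewrite invg_pcomp sref_invg // pcompSK.
apply: supp_col_le_Ti_act supp_Tig _ (fun z => Ti_act_supp_inv hi (v := z)).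
rewrite invgK !pcompE sref_i0 sref_i1.
by move=> /ltnW; apply: leq_trans.
Qed.

Lemma supp_col_le_Tw_act w y g : len (pcomp w y) = (len w + len y)%N ->
  supp_col_le g y -> supp_col_le (Tw_act w g) (pcomp w y).
Proof.
rewrite /Tw_act; move: w y g.
apply: (@redword_ind n (fun w l => forall y g, len (pcomp w y) = (len w + len y)%N ->
  supp_col_le g y -> supp_col_le (foldr (@Ti_act n) g l) (pcomp w y)))
  => [|w i l hi d IH] y g /=; first by rewrite pcomp1w.
move=> add supp_g; rewrite foldr_rcons.
have [_ asc add'] := len_add_desc hi (len_pcompS_desc d) add.
rewrite -(pcompKS hi w) -pcompA; apply: IH add' _.
apply: supp_col_le_Ti_act supp_g _ (fun z => Ti_act_supp hi (v := z)).
by move=> /ltnW; apply: leq_trans asc.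
Qed.

End SupportBound.

Section Columns.
Variable n : nat.
Implicit Types (C : {set 'I_n}) (q y z : 'S_n).

Definition col_in C := [seq x <- enum 'I_n | x \in C].
Definition col_out C := [seq x <- enum 'I_n | x \notin C].

Lemma size_col_in C : size (col_in C) = #|C|.
Proof. by rewrite cardE /enum_mem /col_in enumT. Qed.

Lemma size_col_out C : size (col_out C) = n - #|C|.
Proof.
have := count_predC (mem C) (enum 'I_n).
rewrite -!size_filter size_enum_ord -/(col_in C) size_col_in => e.
have : #|C| + size (col_out C) = n := e.
lia.
Qed.

Lemma sorted_filter_enum (P : pred 'I_n) :
  sorted (fun x y : 'I_n => x < y) [seq x <- enum 'I_n | P x].
Proof.
apply: sorted_filter; first exact: ltn_trans.
by have := iota_ltn_sorted 0 n; rewrite -val_enum_ord sorted_map.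
Qed.

Lemma uC_col_in C (k : 'I_n) : k < #|C| -> uC C k = nth k (col_in C) k.
Proof. by move=> hk; rewrite permE /uC_fun /col_seq nth_cat -/(col_in C) size_col_in hk. Qed.

Lemma uC_col_out C (k : 'I_n) : #|C| <= k -> uC C k = nth k (col_out C) (k - #|C|).
Proof.
by move=> hk; rewrite permE /uC_fun /col_seq nth_cat -/(col_in C) size_col_in ltnNge hk.
Qed.

Lemma mem_uC C (k : 'I_n) : (uC C k \in C) = (k < #|C|).
Proof.
case: (ltnP k #|C|) => hk.
  rewrite uC_col_in //.
  have : nth k (col_in C) k \in col_in C by rewrite mem_nth // size_col_in.
  by rewrite mem_filter => /andP [].
rewrite uC_col_out //.
have : nth k (col_out C) (k - #|C|) \in col_out C.
  by rewrite mem_nth // size_col_out; have := ltn_ord k; lia.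
by rewrite mem_filter => /andP [/negbTE].
Qed.

Lemma uC_ltn C (k1 k2 : 'I_n) : k1 < k2 -> (k2 < #|C|) || (#|C| <= k1) -> uC C k1 < uC C k2.
Proof.
have ltn_tr : transitive (fun x y : 'I_n => x < y) by move=> ???; apply: ltn_trans.
move=> lt /orP [h|h].
  rewrite !uC_col_in //; last by apply: ltn_trans h.
  rewrite (set_nth_default k2 k1); last by rewrite size_col_in; apply: ltn_trans h.
  apply: (sorted_ltn_nth ltn_tr k2 (sorted_filter_enum _)) => //;
    by rewrite inE size_col_in //; exact: ltn_trans h.
rewrite !uC_col_out //; last by apply: leq_trans h (ltnW lt).
have hk2 := ltn_ord k2.
rewrite (set_nth_default k2 k1); last by rewrite size_col_out; lia.
apply: (sorted_ltn_nth ltn_tr k2 (sorted_filter_enum _));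
  by rewrite ?inE ?size_col_out //; lia.
Qed.

Lemma centry_uC C i d (hi : i < n) : i < #|C| -> centry C i d = uC C (Ordinal hi).
Proof.
move=> hC; rewrite uC_col_in //= /centry -/(col_in C).
by apply: set_nth_default; rewrite size_col_in.
Qed.

Lemma stab_varpiE b y (j : 'I_n) : stab_varpi b y -> (y j < b) = (j < b).
Proof. by move=> /forallP /(_ j) /eqP. Qed.

Lemma sum_ltn_ord m : m <= n -> \sum_(k : 'I_n) (k < m) = m.
Proof.
elim: m => [|m IH] hm; first by rewrite big1.
rewrite (eq_bigr (fun k : 'I_n => (k < m) + (k == Ordinal hm))) => [|k _]; last first.
  by rewrite -val_eqE /= ltnS leq_eqVlt; case: ltngtP.
rewrite big_split /= IH ?(ltnW hm) // (bigD1 (Ordinal hm)) //= eqxx big1 ?addn0 ?addn1 //.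
by move=> k /negbTE ->.
Qed.

Lemma nbelow_uC_gt C i (hi : i < n) c : i < #|C| -> uC C (Ordinal hi) < c ->
  i.+1 <= nbelow #|C| (uC C) c.
Proof.
move=> hiC ltc; rewrite -{1}(sum_ltn_ord hi); apply: leq_sum => k _.
case: (ltnP k i.+1) => //= hk; rewrite lt0b (leq_trans hk hiC) /=.
apply: leq_ltn_trans ltc; case: (ltngtP k i) => [hki|hik|eki].
- by apply/ltnW/uC_ltn => //=; rewrite hiC.
- by move: hk hik; lia.
- by rewrite (_ : k = Ordinal hi) //; apply: val_inj.
Qed.

Lemma nbelow_uC_le C i (hi : i < n) c : i < #|C| -> c <= uC C (Ordinal hi) ->
  nbelow #|C| (uC C) c <= i.
Proof.
move=> hiC lec; rewrite -[X in _ <= X](sum_ltn_ord (ltnW hi)); apply: leq_sum => k _.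
case: (ltnP k i) => hk /=; first by case: (_ && _).
rewrite leqn0 eqb0 negb_and orbC; apply/orP; case: (ltnP k #|C|) => hkC; [left|by right].
rewrite -leqNgt.
apply: leq_trans lec _; case: (ltngtP k i) => [|hik|eki]; first by lia.
  by apply/ltnW/uC_ltn => //=; rewrite hkC.
by rewrite (_ : k = Ordinal hi) //; apply: val_inj.
Qed.

Lemma nbelow_pcomp_stab a b z y c : a <= b -> stab_varpi b y ->
  nbelow a (pcomp z y) c <= nbelow b z c.
Proof.
move=> hab st; rewrite [X in _ <= X](reindex_inj (@perm_inj _ y)) /=.
apply: leq_sum => k _; rewrite pcompE (stab_varpiE k st).
by case: (ltnP k a) => //= hk; rewrite (leq_trans hk hab).
Qed.

Lemma semistandard_of_col_le (F E : {set 'I_n}) y :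
  #|E| <= #|F| -> stab_varpi #|F| y -> col_le #|E| (pcomp (uC F) y) (uC E) -> semistandard F E.
Proof.
move=> hEF st le_col i d hiE.
have hi : i < n by apply: leq_trans hiE _; rewrite -[n in _ <= n]card_ord; exact: max_card.
rewrite (centry_uC d hi hiE) (centry_uC d hi (leq_trans hiE hEF)) leqNgt; apply/negP => lt.
have := nbelow_uC_gt hiE (ltnSn (uC E (Ordinal hi))).
have := nbelow_uC_le (leq_trans hiE hEF) lt.
have := nbelow_pcomp_stab (uC F) (uC E (Ordinal hi)).+1 hEF st.
have := le_col (uC E (Ordinal hi)).+1; lia.
Qed.

Lemma stab_varpi_pcompS b y i (hi : i.+1 < n) : stab_varpi b y ->
  y (Ordinal hi) < y (Ordinal (ltnW hi)) ->
  ((i.+1 < b) || (b <= i)) && stab_varpi b (pcomp y (sref n i)).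
Proof.
move=> st desc.
have s1 := stab_varpiE (Ordinal hi) st; have s0 := stab_varpiE (Ordinal (ltnW hi)) st.
rewrite /= in s0 s1.
have blk : (i.+1 < b) || (b <= i).
  case: (ltnP i.+1 b) => //= b_le; rewrite leqNgt; apply/negP => ib.
  have eb : b = i.+1 by lia.
  by move: s0 s1 desc; rewrite eb ltnn ltnSn; lia.
rewrite blk; apply/forallP => j; rewrite pcompE stab_varpiE // srefE // /swapS.
by case: (nat_of_ord j =P i) => [->|_]; [|case: (nat_of_ord j =P i.+1) => [->|_]];
  case/orP: blk => h; apply/eqP; apply/idP/idP; lia.
Qed.

Lemma len_uC_stab (F : {set 'I_n}) y : stab_varpi #|F| y ->
  len (pcomp (uC F) y) = len (uC F) + len y.
Proof.
move: y; apply: (@redword_ind n (fun y _ => stab_varpi #|F| y ->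
  len (pcomp (uC F) y) = len (uC F) + len y)) => [|y i l hi desc IH] st.
  by rewrite pcompw1 len1 addn0.
have /andP [blk st'] := stab_varpi_pcompS st desc.
have := len_pcompS hi (pcomp (uC F) (pcomp y (sref n i))).
rewrite !pcompE sref_i0 sref_i1 -pcompA pcompKS //.
have asc : uC F (y (Ordinal hi)) < uC F (y (Ordinal (ltnW hi))).
  apply: uC_ltn => //; rewrite [#|F| <= _]leqNgt !(stab_varpiE _ st) /=.
  by case/orP: blk => h; rewrite ?(ltnW h) // -leqNgt (leqW h) orbT.
rewrite asc ltnNge (ltnW asc) /= IH //; have := len_pcompS_desc desc; lia.
Qed.

Lemma uC_stab_inj b (F G : {set 'I_n}) q y : #|F| = b -> #|G| = b ->
  stab_varpi b q -> stab_varpi b y -> pcomp (uC F) q = pcomp (uC G) y -> G = F.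
Proof.
move=> hF hG sq sy e; apply/eqP; rewrite eqEcard hF hG leqnn andbT.
apply/subsetP => j jG.
set k := (y^-1)%g (((uC G)^-1)%g j).
have hk : k < b by rewrite -(stab_varpiE k sy) /k permKV -hG -mem_uC permKV.
have : uC G (y k) = uC F (q k) by rewrite -!pcompE e.
by rewrite /k !permKV => ->; rewrite mem_uC hF (stab_varpiE k sq).
Qed.

End Columns.

Section Expansion.
Variable n : nat.
Local Open Scope ring_scope.
Implicit Types (u w y z : 'S_n) (g h x : H n) (F : {set 'I_n}).

Lemma hmulT w g : hmul (T w) g = Tw_act w g.
Proof.
rewrite /hmul (bigD1 w) //= big1 => [|v /negbTE vw].
  by apply/ffunP => z; rewrite !ffunE eqxx mul1r addr0.
by apply/ffunP => z; rewrite !ffunE vw mul0r.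
Qed.

Lemma supp_col_le_Hpar a h : Hpar a h -> supp_col_le a h 1%g.
Proof.
move=> h_par y hy; apply: col_le_stab; apply: contraLR hy => /h_par ->.
by rewrite eqxx.
Qed.

Lemma supp_col_le_inverse a u x : hmul (T (u^-1)%g) x = hone n -> supp_col_le a x u.
Proof.
rewrite -[u in supp_col_le _ _ u]invgK hmulT => x_inv.
apply: supp_col_le_of_Tw_act; rewrite x_inv => z.
by rewrite ffunE; case: (eqVneq z 1%g) => [-> _ c //|]; rewrite eqxx.
Qed.

Lemma supp_col_le_hmul a u x h :
  supp_col_le a x u -> supp_col_le a h 1%g -> supp_col_le a (hmul x h) u.
Proof.
move=> supp_x supp_h z; rewrite /hmul sum_ffunE.
have [w|none] := pickP (fun w => x w * Tw_act w h z != 0); last first.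
  by rewrite big1 ?eqxx // => w _; rewrite ffunE; apply/eqP/negbFE/none.
rewrite mulf_eq0 negb_or => /andP [xw Thz] _.
apply: col_le_trans (supp_x w xw).
have add1 : len (pcomp w 1) = (len w + len (1%g : 'S_n))%N by rewrite pcompw1 len1 addn0.
by have := supp_col_le_Tw_act add1 supp_h Thz; rewrite pcompw1.
Qed.

Lemma Tw_act_uC_stab F g :
  Hpar #|F| g -> forall z, Tw_act (uC F) g z = g (pcomp ((uC F)^-1)%g z).
Proof.
move=> g_par; apply: Tw_act_additive => y gy; apply: len_uC_stab.
by apply: contraLR gy => /g_par ->; rewrite eqxx.
Qed.

Lemma coset_expansion_coef b (hF : {set 'I_n} -> H n) (F0 : {set 'I_n}) y :
  (forall F, #|F| = b -> Hpar b (hF F)) -> #|F0| = b -> stab_varpi b y ->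
  (\sum_(F : {set 'I_n} | #|F| == b) hmul (T (uC F)) (hF F)) (pcomp (uC F0) y) = hF F0 y.
Proof.
move=> hF_par hF0 st; rewrite sum_ffunE (bigD1 F0) ?hF0 ?eqxx //= big1 ?addr0.
  by rewrite hmulT Tw_act_uC_stab ?hF0 ?pcompVK //; apply: hF_par.
move=> F /andP [/eqP cardF F_neq]; rewrite hmulT Tw_act_uC_stab ?cardF; last exact: hF_par.
apply/eqP; move: F_neq; apply: contraR => nz.
have sq : stab_varpi b (pcomp ((uC F)^-1)%g (pcomp (uC F0) y)).
  by move: nz; apply: contraR => /(hF_par F cardF) ->.
by apply/eqP/esym; apply: (uC_stab_inj cardF hF0 sq st); rewrite pcompKV.
Qed.

End Expansion.

Unset Implicit Arguments.
Local Open Scope ring_scope.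

Theorem proposition5p2 (n a b : nat) (E : {set 'I_n}) (h x : H n)
    (hF : {set 'I_n} -> H n) :
  (1 <= a)%N -> (a <= b)%N -> (b <= n)%N ->
  #|E| = a ->
  laurentH h -> Hpar a h ->
  (* x = (T_{u_E^{-1}})^{-1} *)
  hmul (T (uC E)^-1%g) x = hone n -> hmul x (T (uC E)^-1%g) = hone n ->
  (forall F : {set 'I_n}, #|F| = b -> laurentH (hF F) /\ Hpar b (hF F)) ->
  hsc (tt ^+ len (uC E)) (hmul x h)
    = \sum_(F : {set 'I_n} | #|F| == b) hmul (T (uC F)) (hF F) ->
  forall F : {set 'I_n}, #|F| = b -> ~ semistandard F E -> hF F = 0.
Proof.
move=> _ hab _ cardE _ h_par x_inv _ hF_lpar expand F0 cardF0 not_ss.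
have hF_par (F : {set 'I_n}) : #|F| = b -> Hpar b (hF F) by move=> /hF_lpar [].
have supp_xh : supp_col_le a (hmul x h) (uC E).
  exact: supp_col_le_hmul (supp_col_le_inverse a x_inv) (supp_col_le_Hpar h_par).
apply/ffunP => y; rewrite ffunE.
have [st|nst] := boolP (stab_varpi b y); last exact: hF_par F0 cardF0 y nst.
have := congr1 (fun f : H n => f (pcomp (uC F0) y)) expand.
rewrite coset_expansion_coef // ffunE => <-.
have [->|nz] := eqVneq (hmul x h (pcomp (uC F0) y)) 0; first by rewrite mulr0.
rewrite -cardF0 in st; case: not_ss; apply: (semistandard_of_col_le _ st).
  by rewrite cardE cardF0.
by rewrite cardE; exact: supp_xh.
Qed.
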